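(* Let $G$ be a finite group, let $n\ge 1$ and let $m$ be odd. If $G$ is $R_{2^n m}$, then $G$ has at most $m(2^n-1)$ conjugacy classes containing involutions.
   Context: For a finite group $G$, $\overline{G}=G\cup\{\infty\}$, and $K_V$ denotes the complete graph on vertex set $V$. $G$ acts on $\overline{G}$ by right multiplication, with $\infty g=\infty$ for all $g\in G$; for a subgraph $F$ of $K_{\overline{G}}$ and $g\in G$, $Fg$ is the graph obtained by replacing every vertex $v$ by $vg$. A $k$-factor of $K_V$ is a spanning $k$-regular subgraph, and a $k$-factorization is a set of $k$-factors whose edge sets partition the edge set of $K_V$. A $k$-factorization $\mathcal{F}$ of $K_{\overline{G}}$ is $1$-rotational if $Fg\in\mathcal{F}$ for all $F\in\mathcal{F}$ and $g\in G$. A finite group $G$ is called $R_k$ if there exists a $1$-rotational $k$-factorization of $K_{\overline{G}}$. An involution is an element of order $2$. *)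

From mathcomp Require Import all_boot all_fingroup.
Set Implicit Arguments. Unset Strict Implicit. Unset Printing Implicit Defensive.


(* Vertex set  Gbar = G ∪ {∞}  is  option gT  (None = ∞).
   The finite group G is the whole finGroupType gT. *)

Definition vact (gT : finGroupType) (v : option gT) (g : gT) : option gT :=
  omap (fun x => (x * g)%g) v.

(* A subgraph of K_Gbar is given by its edge set; an edge is a 2-subset. *)
Definition is_edge (gT : finGroupType) (e : {set option gT}) : bool := #|e| == 2%N.

Definition graph_act (gT : finGroupType) (F : {set {set option gT}}) (g : gT)
  : {set {set option gT}} :=
  [set [set vact v g | v in e] | e : {set option gT} in F].

Definition is_kfactor (gT : finGroupType) (k : nat) (F : {set {set option gT}}) : Prop :=
  (forall e, e \in F -> is_edge e) /\
  (forall v : option gT, #|[set e in F | v \in e]| = k).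

Definition is_kfactorization (gT : finGroupType) (k : nat)
  (FF : {set {set {set option gT}}}) : Prop :=
  (forall F, F \in FF -> is_kfactor k F) /\
  (forall e : {set option gT}, is_edge e -> #|[set F in FF | e \in F]| = 1%N).

Definition one_rotational (gT : finGroupType) (FF : {set {set {set option gT}}}) : Prop :=
  forall F g, F \in FF -> graph_act F g \in FF.

Definition is_Rk (gT : finGroupType) (k : nat) : Prop :=
  exists FF : {set {set {set option gT}}},
    is_kfactorization k FF /\ one_rotational FF.

Definition involution_classes (gT : finGroupType) : {set {set gT}} :=
  [set C in classes [set: gT] | [exists x in C, #[x]%g == 2%N]].

(** If [FF] is a 1-rotational [k]-factorization of the complete graph on
    [G ∪ {∞}], then [G] permutes the factors transitively, since every factor
    contains an edge [{∞, y}] and that edge lies in the translate by [y] of the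
    factor [F0] containing [{∞, 1}].  The stabiliser [H] of [F0] acts freely on
    the [k] neighbours of [∞] in [F0], so [#|H|] divides [k = 2^n m] and a
    Sylow 2-subgroup [P] of [H] has order at most [2^n].  An involution [t]
    fixes the factor containing the edge [{1, t}], so a conjugate of [t] lies
    in [H], hence in [P].  Every class of involutions thus meets [P \ 1], so
    there are at most [2^n - 1] of them, whatever [n]. *)

From mathcomp Require Import all_boot all_fingroup.
From mathcomp Require Import pgroup sylow.

Set Implicit Arguments.
Unset Strict Implicit.
Unset Printing Implicit Defensive.

Section GraphAction.
Variable gT : finGroupType.
Implicit Types (F : {set {set option gT}}) (e : {set option gT}) (g h : gT).

Lemma vact1 (v : option gT) : vact v 1 = v.
Proof. by case: v => [x|] //=; rewrite /vact /= mulg1. Qed.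

Lemma vactM (v : option gT) g h : vact (vact v g) h = vact v (g * h).
Proof. by case: v => [x|] //=; rewrite /vact /= mulgA. Qed.

Lemma graph_act1 F : graph_act F 1 = F.
Proof.
rewrite /graph_act -[RHS]imset_id; apply: eq_imset => e.
by rewrite -[RHS]imset_id; apply: eq_imset => v; rewrite vact1.
Qed.

Lemma graph_actM F g h : graph_act (graph_act F g) h = graph_act F (g * h).
Proof.
rewrite /graph_act -imset_comp; apply: eq_imset => e /=.
by rewrite -imset_comp; apply: eq_imset => v /=; rewrite vactM.
Qed.

Lemma mem_graph_act_pair F g (u v : option gT) :
  [set u; v] \in F -> [set vact u g; vact v g] \in graph_act F g.
Proof.
move=> /(imset_f (fun e => [set vact w g | w in e])).
by rewrite imsetU1 imset_set1.
Qed.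

Lemma is_edge_pair (u v : option gT) : u != v -> is_edge [set u; v].
Proof. by rewrite /is_edge cards2 => ->. Qed.

Lemma edge_inftyP e : is_edge e -> None \in e -> exists x, e = [set None; Some x].
Proof.
case/cards2P=> a [b [neq_ab ->]]; rewrite !inE => /orP[] /eqP def_infty.
  by rewrite -def_infty in neq_ab *; case: b neq_ab => [x|] // _; exists x.
rewrite -def_infty in neq_ab *; case: a neq_ab => [x|] // _.
by exists x; rewrite setUC.
Qed.

Definition nbhd_infty F : {set gT} := [set x | [set None; Some x] \in F].

Lemma card_nbhd_infty k F : is_kfactor k F -> #|nbhd_infty F| = k.
Proof.
case=> edgeF /(_ None) <-.
have inj_pair : injective (fun x : gT => [set None; Some x]).
  by move=> x y /setP/(_ (Some x)); rewrite !inE eqxx => /esym/eqP[].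
rewrite -(card_imset _ inj_pair); apply: eq_card => e.
apply/imsetP/idP => [[x] | ]; first by rewrite !inE => xF ->; rewrite xF set21.
rewrite inE => /andP[eF infty_e].
have [x def_e] := edge_inftyP (edgeF e eF) infty_e.
by exists x; rewrite // inE -def_e.
Qed.

Definition factor_stab F : {set gT} := [set g | graph_act F g == F].

Lemma factor_stab_group_set F : group_set (factor_stab F).
Proof.
apply/group_setP; split=> [|g h]; first by rewrite inE graph_act1.
by rewrite !inE -graph_actM => /eqP-> /eqP->.
Qed.

Canonical factor_stab_group F := Group (factor_stab_group_set F).

Lemma dvdn_card_rclosed (H : {group gT}) (A : {set gT}) :
  (A * H \subset A)%g -> #|H| %| #|A|.
Proof.
move=> sAH_A; have actsHA : [acts H, on A | 'R].
  by apply/actsP=> h Hh x; apply/idP/idP=> Ax;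
    [rewrite -(mulgK h x) | ]; apply: (subsetP sAH_A); rewrite mem_mulg ?groupV.
have partA := orbit_partition actsHA.
rewrite (@card_uniform_partition _ #|H| _ _ _ partA) ?dvdn_mull //.
by move=> _ /imsetP[x _ ->]; rewrite orbitR card_lcoset.
Qed.

Lemma dvdn_card_stab_nbhd F : #|factor_stab F| %| #|nbhd_infty F|.
Proof.
apply: dvdn_card_rclosed; apply/subsetP=> y /mulsgP[x h xN hF ->].
by rewrite !inE in xN hF *; rewrite -(eqP hF) (mem_graph_act_pair h xN).
Qed.

End GraphAction.

Section RotationalFactorization.
Variables (gT : finGroupType) (k : nat) (FF : {set {set {set option gT}}}).
Hypotheses (factFF : is_kfactorization k FF) (rotFF : one_rotational FF).
Hypothesis k_gt0 : 0 < k.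

Lemma factor_of_edge e : is_edge e -> exists2 F, F \in FF & e \in F.
Proof.
move/(proj2 factFF)/eqP/cards1P=> [F defFF]; exists F;
  by have /[!inE] /andP[] : F \in [set F in FF | e \in F] by rewrite defFF set11.
Qed.

Lemma factor_of_edge_uniq e F1 F2 : is_edge e ->
  F1 \in FF -> F2 \in FF -> e \in F1 -> e \in F2 -> F1 = F2.
Proof.
move/(proj2 factFF)/eqP/cards1P=> [F defFF] F1FF F2FF eF1 eF2.
have: F1 \in [set F in FF | e \in F] by rewrite inE F1FF eF1.
have: F2 \in [set F in FF | e \in F] by rewrite inE F2FF eF2.
by rewrite defFF !inE => /eqP-> /eqP->.
Qed.

Variable F0 : {set {set option gT}}.
Hypotheses (F0_FF : F0 \in FF) (F0_infty1 : [set None; Some (1%g : gT)] \in F0).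

Lemma factor_translate F : F \in FF -> exists y, F = graph_act F0 y.
Proof.
move=> F_FF; have: 0 < #|nbhd_infty F|.
  by rewrite (card_nbhd_infty (proj1 factFF F F_FF)).
case/card_gt0P=> y /[!inE] yF; exists y.
apply: (factor_of_edge_uniq (is_edge_pair _) F_FF (rotFF y F0_FF) yF) => //.
by have := mem_graph_act_pair y F0_infty1; rewrite /vact /= mul1g.
Qed.

Lemma involution_conj_in_stab t :
  #[t]%g = 2 -> exists y, (t ^ y)%g \in factor_stab F0.
Proof.
move=> ot; have t_neq1 : (t != 1)%g by apply/eqP=> t1; rewrite t1 order1 in ot.
have tt1 : (t * t = 1)%g by rewrite -expg2 -ot expg_order.
have edge1t : is_edge [set Some 1%g; Some t].
  by apply: is_edge_pair; apply: contra t_neq1 => /eqP[<-].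
have [F F_FF e1tF] := factor_of_edge edge1t.
have Ft : graph_act F t = F.
  apply: (factor_of_edge_uniq edge1t (rotFF t F_FF) F_FF _ e1tF).
  by have := mem_graph_act_pair t e1tF; rewrite /vact /= mul1g tt1 setUC.
have [y defF] := factor_translate F_FF; exists y^-1%g.
by rewrite inE conjgE invgK -!graph_actM -defF Ft defF graph_actM mulgV graph_act1.
Qed.

End RotationalFactorization.

Lemma Sylow_dvdn_pfactor (gT : finGroupType) (H P : {group gT}) p n m :
  prime p -> coprime p m -> (p.-Sylow(H) P)%g -> #|H| %| p ^ n * m -> #|P| %| p ^ n.
Proof.
move=> p_pr co_pm sylP dvdH; have /p_natP[e cardP] := pHall_pgroup sylP.
have := dvdn_trans (cardSg (pHall_sub sylP)) dvdH.
by rewrite cardP Gauss_dvdl // coprimeXl.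
Qed.

Lemma card_involution_classes_Sylow (gT : finGroupType) (H P : {group gT}) :
  (2.-Sylow(H) P)%g -> (forall t : gT, #[t]%g = 2 -> exists y, (t ^ y)%g \in H) ->
  #|involution_classes gT| <= #|P| - 1.
Proof.
move=> sylP conjH.
have classP t : #[t]%g = 2 -> exists2 u, u \in (P :\ 1)%g & (t ^: setT = u ^: setT)%g.
  move=> ot; have [y tyH] := conjH t ot.
  have two_ty : (2.-group <[t ^ y]>)%g by rewrite /pgroup -orderE orderJ ot pnat_id.
  have [x xH sP] := Sylow_subJ sylP (etrans (cycle_subG _ _) tyH) two_ty.
  exists ((t ^ y) ^ x^-1)%g; last by rewrite !classGidl ?inE.
  rewrite !inE -mem_conjg (subsetP sP) ?cycle_id // andbT !conjg_eq1.
  by apply/eqP=> t1; rewrite t1 order1 in ot.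
have sub : involution_classes gT \subset (fun u => u ^: setT)%g @: (P :\ 1)%g.
  apply/subsetP=> _ /[!inE] /andP[/imsetP[z _ ->] /exists_inP[t tz /eqP ot]].
  have [u uP tu] := classP t ot; apply/imsetP; exists u => //.
  by rewrite -tu; case/imsetP: tz => w _ ->; rewrite classGidl ?inE.
apply: leq_trans (subset_leq_card sub) _; apply: leq_trans (leq_imset_card _ _) _.
by rewrite (cardsD1 1%g P) group1 add1n subn1.
Qed.

Theorem theorem2p5 (gT : finGroupType) (n m : nat) :
  1 <= n -> odd m -> is_Rk gT (2 ^ n * m) ->
  #|involution_classes gT| <= m * (2 ^ n - 1).
Proof.
move=> _ odd_m [FF [factFF rotFF]].
have m_gt0 : 0 < m by case: m odd_m factFF.
have k_gt0 : 0 < 2 ^ n * m by rewrite muln_gt0 expn_gt0 m_gt0.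
have [F0 F0_FF F0_infty1] :=
  factor_of_edge factFF (is_edge_pair (u := None) (v := Some 1%g) isT).
have [P sylP] := Sylow_exists 2 (factor_stab_group F0).
have cardP : #|P| <= 2 ^ n.
  apply: dvdn_leq; first by rewrite expn_gt0.
  apply: (Sylow_dvdn_pfactor (m := m) _ _ sylP) => //; first by rewrite coprime2n.
  by rewrite -(card_nbhd_infty (proj1 factFF F0 F0_FF)) dvdn_card_stab_nbhd.
have conj_stab := involution_conj_in_stab factFF rotFF k_gt0 F0_FF F0_infty1.
apply: leq_trans (card_involution_classes_Sylow sylP conj_stab) _.
by rewrite (leq_trans (leq_sub2r 1 cardP)) // leq_pmull.
Qed.
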